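(* Let $c,R>0$ and let $\Omega\subset\mathbb H^n$ be an open convex set with $B_H(0,cR)\subset\Omega$. Let $u:\overline\Omega\to\mathbb R$ be an $H$-convex function with $u\le0$ in $\Omega$. Let $\xi_1,\xi_2\in B_H(0,cR)$ with $\xi_2\in H_{\xi_1}$, and let $c_1,c_2\ge0$, $c_3>0$ be constants such that $N(\xi_1)\le c_1R$, $N(\xi_2)\le c_2R$, $d_H(\xi_1,\xi_2)\le c_3R$, $c_1+c_3<c$ and $c_2+c_3<c$. Then $$\frac{c-c_1-c_3}{c-c_1}\,u(\xi_1)\ge u(\xi_2)\ge\frac{c-c_2}{c-c_2-c_3}\,u(\xi_1).$$
   Context: $\mathbb H^n=\mathbb C^n\times\mathbb R\cong\mathbb R^{2n+1}$ with real coordinates $(x,y,t)$, $z=x+iy$, group law $(z,t)\circ(z',t')=(z+z',t+t'+2\,\mathrm{Im}\langle z,z'\rangle)$, $\langle z,z'\rangle=\sum_j z_j\overline{z'_j}$. Dilations $\delta_\lambda(z,t)=(\lambda z,\lambda^2t)$. Horizontal plane at $\xi_0=(x_0,y_0,t_0)$: $H_{\xi_0}=\{(x,y,t):t=t_0+2(x\cdot y_0-x_0\cdot y)\}$. Gauge $N(z,t)=(|z|^4+t^2)^{1/4}$, $d_H(\xi,\zeta)=N(\zeta^{-1}\circ\xi)$, $B_H(\xi,r)=\{\zeta:d_H(\zeta,\xi)<r\}$. A function $u$ on an $H$-convex set $\tilde\Omega$ is $H$-convex if $u(\xi_1\circ\delta_\lambda(\xi_1^{-1}\circ\xi_2))\le(1-\lambda)u(\xi_1)+\lambda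 u(\xi_2)$ for all $\xi_1,\xi_2\in\tilde\Omega$ with $\xi_1\in H_{\xi_2}$, $\lambda\in[0,1]$. *)

From HB Require Import structures.
From mathcomp Require Import all_boot all_order all_algebra.
From mathcomp Require Import all_classical all_reals all_analysis.
Set Implicit Arguments. Unset Strict Implicit. Unset Printing Implicit Defensive.
Import Order.TTheory GRing.Theory Num.Theory.
Local Open Scope ring_scope.
Import numFieldNormedType.Exports.
Local Open Scope classical_set_scope.

(* H^n = C^n x R = R^n x R^n x R, coordinates ((x, y), t), z = x + i y. *)
Notation heis n R := ('rV[R]_n * 'rV[R]_n * R)%type.

Section Heis.
Variables (n : nat) (R : realType).
Implicit Types (p q : heis n R).

Definition hx p : 'rV[R]_n := p.1.1.
Definition hy p : 'rV[R]_n := p.1.2.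
Definition ht p : R := p.2.

Definition dotr (a b : 'rV[R]_n) : R := \sum_(j < n) a 0 j * b 0 j.

Definition horigin : heis n R := (0, 0, 0).

(* Im <z, z'> = sum_j (y_j x'_j - x_j y'_j) *)
Definition hmul p q : heis n R :=
  (hx p + hx q, hy p + hy q,
   ht p + ht q + 2 * (dotr (hy p) (hx q) - dotr (hx p) (hy q))).

Definition hinv p : heis n R := (- hx p, - hy p, - ht p).

Definition hdil (l : R) p : heis n R := (l *: hx p, l *: hy p, l ^+ 2 * ht p).

Definition gauge p : R :=
  Num.sqrt (Num.sqrt ((dotr (hx p) (hx p) + dotr (hy p) (hy p)) ^+ 2 + ht p ^+ 2)).

Definition dH p q : R := gauge (hmul (hinv q) p).

Definition ballH p (r : R) : set (heis n R) := [set q | dH q p < r].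

Definition horiz (p0 : heis n R) : set (heis n R) :=
  [set p | ht p = ht p0 + 2 * (dotr (hx p) (hy p0) - dotr (hx p0) (hy p))].

Definition eucl_convex (D : set (heis n R)) : Prop :=
  forall p q, D p -> D q -> forall s : R, 0 <= s <= 1 ->
    D ((1 - s) *: hx p + s *: hx q, (1 - s) *: hy p + s *: hy q,
       (1 - s) * ht p + s * ht q).

Definition Hconvex_fun (D : set (heis n R)) (u : heis n R -> R) : Prop :=
  forall p1 p2, D p1 -> D p2 -> horiz p2 p1 -> forall l : R, 0 <= l <= 1 ->
    u (hmul p1 (hdil l (hmul (hinv p1) p2))) <= (1 - l) * u p1 + l * u p2.

End Heis.

From HB Require Import structures.
From mathcomp Require Import all_boot all_order all_algebra.
From mathcomp Require Import all_classical all_reals all_analysis.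
From mathcomp Require Import lra ring.
Import Order.TTheory GRing.Theory Num.Theory.
Local Open Scope ring_scope.
Import numFieldNormedType.Exports.
Local Open Scope classical_set_scope.
Set Implicit Arguments. Unset Strict Implicit.

(* Write [N(p)^2] as the planar norm of [(|z|^2, t)]. Right translation by a
   horizontal [v = (w, 0)] adds [(|w|^2 + 2 Re<z,w>, 2 Im<z,w>)], whose planar
   norm is at most [|w|^2 + 2 |z| |w| <= N(v)^2 + 2 N(p) N(v)] by Cauchy-Schwarz;
   so [N(p o v) <= N(p) + N(v)]. Prolonging the horizontal segment from [p]
   through [q] by the factor [1/mu] therefore stays inside [B_H(0, cR)] as soon
   as [mu > c3 / (c - c1)], and H-convexity on that segment together with
   [u <= 0] gives [u(q) <= (1 - mu) u(p)]. Letting [mu] decrease to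
   [c3 / (c - c1)] gives the first inequality; the second is the same estimate
   with the two points exchanged. *)

Section PlanarNorm.
Variable R : rcfType.
Implicit Types a b c d k : R.

Definition norm2 a b : R := Num.sqrt (a ^+ 2 + b ^+ 2).

Lemma norm2_ge0 a b : 0 <= norm2 a b.
Proof. exact: sqrtr_ge0. Qed.

Lemma sqr_norm2 a b : norm2 a b ^+ 2 = a ^+ 2 + b ^+ 2.
Proof. by rewrite sqr_sqrtr // addr_ge0 ?sqr_ge0. Qed.

Lemma norm2r0 a : norm2 a 0 = `|a|.
Proof. by rewrite /norm2 expr0n addr0 sqrtr_sqr. Qed.

Lemma ler_norm2l a b : a <= norm2 a b.
Proof.
apply: (le_trans (ler_norm a)); rewrite -sqrtr_sqr ler_sqrt ?addr_ge0 ?sqr_ge0 //.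
by rewrite lerDl sqr_ge0.
Qed.

Lemma norm2Z k a b : norm2 (k * a) (k * b) = `|k| * norm2 a b.
Proof. by rewrite /norm2 !exprMn -mulrDr sqrtrM ?sqr_ge0 // sqrtr_sqr. Qed.

Lemma ler_mul_norm2 a b c d : a * b + c * d <= norm2 a c * norm2 b d.
Proof.
have AB_ge0 : 0 <= norm2 a c * norm2 b d by rewrite mulr_ge0 ?norm2_ge0.
have : (a * b + c * d) ^+ 2 <= (norm2 a c * norm2 b d) ^+ 2.
  rewrite exprMn !sqr_norm2 -subr_ge0.
  have -> : (a ^+ 2 + c ^+ 2) * (b ^+ 2 + d ^+ 2) - (a * b + c * d) ^+ 2
    = (a * d - b * c) ^+ 2 by ring.
  exact: sqr_ge0.
nra.
Qed.

Lemma norm2D a b c d : norm2 (a + b) (c + d) <= norm2 a c + norm2 b d.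
Proof.
have AB_ge0 : 0 <= norm2 a c + norm2 b d by rewrite addr_ge0 ?norm2_ge0.
rewrite -[leRHS]ger0_norm // -sqrtr_sqr ler_sqrt ?sqr_ge0 //.
have := ler_mul_norm2 a b c d.
have := sqr_norm2 a c; have := sqr_norm2 b d; nra.
Qed.

End PlanarNorm.

Section DotProduct.
Variables (n : nat) (R : realType).
Implicit Types (a b x y : 'rV[R]_n) (k : R).

Lemma dotrC a b : dotr a b = dotr b a.
Proof. by apply: eq_bigr => j _; rewrite mulrC. Qed.

Lemma dotrDl a b x : dotr (a + b) x = dotr a x + dotr b x.
Proof. by rewrite /dotr -big_split; apply: eq_bigr => j _; rewrite !mxE mulrDl. Qed.

Lemma dotrDr a b x : dotr x (a + b) = dotr x a + dotr x b.
Proof. by rewrite dotrC dotrDl !(dotrC x). Qed.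

Lemma dotrNl a b : dotr (- a) b = - dotr a b.
Proof. by rewrite /dotr -sumrN; apply: eq_bigr => j _; rewrite !mxE mulNr. Qed.

Lemma dotrNr a b : dotr a (- b) = - dotr a b.
Proof. by rewrite dotrC dotrNl dotrC. Qed.

Lemma dotrZl k a b : dotr (k *: a) b = k * dotr a b.
Proof. by rewrite /dotr mulr_sumr; apply: eq_bigr => j _; rewrite !mxE mulrA. Qed.

Lemma dotrZr k a b : dotr a (k *: b) = k * dotr a b.
Proof. by rewrite dotrC dotrZl dotrC. Qed.

Lemma dotr0r a : dotr a 0 = 0.
Proof. by rewrite /dotr big1 // => j _; rewrite mxE mulr0. Qed.

Lemma dotr_ge0 a : 0 <= dotr a a.
Proof. by apply: sumr_ge0 => j _; rewrite -expr2 sqr_ge0. Qed.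

Lemma dotr_eq0 a : (dotr a a == 0) = (a == 0).
Proof.
apply/idP/eqP => [|->]; last by rewrite dotr0r.
rewrite /dotr psumr_eq0 => [/allP a0|j _]; last by rewrite -expr2 sqr_ge0.
apply/rowP => j; rewrite mxE; apply/eqP.
by rewrite -sqrf_eq0 expr2; apply: (implyP (a0 j (mem_index_enum j))).
Qed.

Lemma dotr_cauchy_schwarz x y a b :
  (dotr x a + dotr y b) ^+ 2 + (dotr y a - dotr x b) ^+ 2 <=
  (dotr x x + dotr y y) * (dotr a a + dotr b b).
Proof.
set S := dotr x x + dotr y y; set s := dotr a a + dotr b b.
set P := dotr x a + dotr y b; set Q := dotr y a - dotr x b.
have [s0 | s_neq0] := eqVneq s 0.
  move/eqP: s0; rewrite /s paddr_eq0 ?dotr_ge0 // !dotr_eq0 => /andP[/eqP a0 /eqP b0].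
  by rewrite /P /Q /s a0 b0 !dotr0r subrr addr0 expr0n /= addr0 mulr0.
have s_gt0 : 0 < s by rewrite lt_def s_neq0 addr_ge0 ?dotr_ge0.
(* the squared norms of [s x - P a + Q b] and [s y - P b - Q a] add up to [s (s S - P^2 - Q^2)] *)
have : 0 <= s * (s * S - (P ^+ 2 + Q ^+ 2)).
  have := addr_ge0 (dotr_ge0 (s *: x - P *: a + Q *: b)) (dotr_ge0 (s *: y - P *: b - Q *: a)).
  rewrite !(dotrDl, dotrDr, dotrNl, dotrNr, dotrZl, dotrZr).
  rewrite [dotr a x]dotrC [dotr b x]dotrC [dotr b a]dotrC [dotr b y]dotrC [dotr a y]dotrC.
  by congr (_ <= _); rewrite /S /s /P /Q; ring.
by rewrite pmulr_rge0 // subr_ge0 mulrC.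
Qed.

End DotProduct.

Section HeisenbergGroup.
Variables (n : nat) (R : realType).
Implicit Types (p q v : heis n R) (l m : R).

Lemma hmulKV p v : hmul p (hmul (hinv p) v) = v.
Proof.
case: p v => [[x y] t] [[a b] s]; rewrite /hmul /hinv /hx /hy /ht /=.
congr (_, _, _); rewrite ?addNKr //.
by rewrite !dotrDr !dotrNl !dotrNr [dotr y x]dotrC; ring.
Qed.

Lemma hmulK p v : hmul (hinv p) (hmul p v) = v.
Proof.
case: p v => [[x y] t] [[a b] s]; rewrite /hmul /hinv /hx /hy /ht /=.
congr (_, _, _); rewrite ?addKr //.
by rewrite !dotrDr !dotrNl [dotr y x]dotrC; ring.
Qed.

Lemma hdilM l m v : hdil m (hdil l v) = hdil (m * l) v.
Proof. by rewrite /hdil /hx /hy /ht /= !scalerA exprMn mulrA. Qed.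

Lemma hdil1 v : hdil 1 v = v.
Proof. by case: v => [[x y] t]; rewrite /hdil /hx /hy /ht /= !scale1r expr1n mul1r. Qed.

Lemma dH0 p : dH p (horigin n R) = gauge p.
Proof.
case: p => [[a b] s]; rewrite /dH /hmul /hinv /horigin /hx /hy /ht /= !oppr0 !add0r.
by rewrite [dotr 0 _]dotrC [dotr 0 _]dotrC !dotr0r subrr mulr0 addr0.
Qed.

Lemma gauge_hinv v : gauge (hinv v) = gauge v.
Proof. by rewrite /gauge /hinv /hx /hy /ht /= !dotrNl !dotrNr !opprK sqrrN. Qed.

Lemma hinv_hmul_hinv p q : hinv (hmul (hinv q) p) = hmul (hinv p) q.
Proof.
case: p q => [[x y] t] [[a b] s]; rewrite /hmul /hinv /hx /hy /ht /=.
congr (_, _, _); rewrite ?opprD ?opprK 1?addrC //.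
by rewrite !dotrNl [dotr a y]dotrC [dotr b x]dotrC; ring.
Qed.

Lemma dHC p q : dH p q = dH q p.
Proof. by rewrite /dH -gauge_hinv hinv_hmul_hinv. Qed.

Lemma horiz_hmul p v : horiz p (hmul p v) <-> ht v = 0.
Proof.
have e : ht (hmul p v) = ht p + ht v +
    2 * (dotr (hx (hmul p v)) (hy p) - dotr (hx p) (hy (hmul p v))).
  rewrite /hmul /hx /hy /ht /= !(dotrDl, dotrDr) [dotr v.1.1 _]dotrC; ring.
by move: e; rewrite /horiz /= => e; split=> h; lra.
Qed.

Lemma horizC p q : horiz p q -> horiz q p.
Proof. by rewrite /horiz /= => ->; rewrite [dotr (hx q) _]dotrC [dotr (hx p) _]dotrC; lra. Qed.

End HeisenbergGroup.

Section Gauge.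
Variables (n : nat) (R : realType).
Implicit Types (p v : heis n R) (l : R).

Definition hzsqr p : R := dotr (hx p) (hx p) + dotr (hy p) (hy p).

Lemma hzsqr_ge0 p : 0 <= hzsqr p.
Proof. by rewrite addr_ge0 ?dotr_ge0. Qed.

Lemma gaugeE p : gauge p = Num.sqrt (norm2 (hzsqr p) (ht p)).
Proof. by []. Qed.

Lemma gauge_ge0 p : 0 <= gauge p.
Proof. exact: sqrtr_ge0. Qed.

Lemma sqr_gauge p : gauge p ^+ 2 = norm2 (hzsqr p) (ht p).
Proof. by rewrite sqr_sqrtr ?norm2_ge0. Qed.

Lemma gauge_ht0 v : ht v = 0 -> gauge v = Num.sqrt (hzsqr v).
Proof. by move=> v0; rewrite gaugeE v0 norm2r0 ger0_norm ?hzsqr_ge0. Qed.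

Lemma gauge_hdil l p : 0 <= l -> gauge (hdil l p) = l * gauge p.
Proof.
move=> l_ge0; have l2_ge0 : 0 <= l ^+ 2 by rewrite sqr_ge0.
rewrite gaugeE; have -> : hzsqr (hdil l p) = l ^+ 2 * hzsqr p.
  by rewrite /hzsqr /hdil /hx /hy /= !(dotrZl, dotrZr) mulrDr !mulrA -expr2.
rewrite /= norm2Z ger0_norm // sqrtrM // sqrtr_sqr ger0_norm //.
Qed.

Lemma hzsqr_hmul p v : hzsqr (hmul p v) = hzsqr p + hzsqr v +
  2 * (dotr (hx p) (hx v) + dotr (hy p) (hy v)).
Proof.
rewrite /hzsqr /hmul /hx /hy /= !(dotrDl, dotrDr).
by rewrite [dotr v.1.1 _]dotrC [dotr v.1.2 _]dotrC; ring.
Qed.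

Lemma gauge_hmul_ht0 p v : ht v = 0 -> gauge (hmul p v) <= gauge p + gauge v.
Proof.
move=> v0; rewrite -ler_sqr ?nnegrE ?addr_ge0 ?gauge_ge0 // sqr_gauge hzsqr_hmul.
set S := hzsqr p; set s := hzsqr v.
set P := dotr (hx p) (hx v) + dotr (hy p) (hy v).
set Q := dotr (hy p) (hx v) - dotr (hx p) (hy v).
have -> : ht (hmul p v) = ht p + (0 + 2 * Q) by rewrite /= v0 addr0 add0r.
have PQ_le : norm2 P Q <= Num.sqrt S * gauge v.
  rewrite gauge_ht0 // -sqrtrM ?hzsqr_ge0 // ler_sqrt ?mulr_ge0 ?hzsqr_ge0 //.
  exact: dotr_cauchy_schwarz.
have S_le : Num.sqrt S * gauge v <= gauge p * gauge v.
  by rewrite ler_wpM2r ?gauge_ge0 // ler_sqrt ?norm2_ge0 // ler_norm2l.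
have s_eq : s = gauge v ^+ 2 by rewrite gauge_ht0 // sqr_sqrtr ?hzsqr_ge0.
have := norm2D s (2 * P) 0 (2 * Q).
rewrite norm2r0 norm2Z !ger0_norm ?hzsqr_ge0 // => le_s.
have := norm2D S (s + 2 * P) (ht p) (0 + 2 * Q); rewrite -sqr_gauge => le_S.
rewrite -[S + s + _]addrA; apply: (le_trans le_S); lra.
Qed.

End Gauge.

Lemma ler_onem_mul_lim (R : realFieldType) (x y m0 : R) : m0 < 1 ->
  (forall m, m0 < m <= 1 -> y <= (1 - m) * x) -> y <= (1 - m0) * x.
Proof.
move=> m0_lt1 le_y; apply/ler_addgt0Pr => e e_gt0.
have nx_gt0 : 0 < `|x| + 1 := ltr_wpDl (normr_ge0 x) ltr01.
set d := Num.min (1 - m0) (e / (`|x| + 1)).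
have d_gt0 : 0 < d by rewrite lt_min subr_gt0 m0_lt1 divr_gt0.
have d_le1 : d <= 1 - m0 by rewrite ge_min lexx.
have d_le : d * (`|x| + 1) <= e by rewrite -ler_pdivlMr // ge_min lexx orbT.
have Nx_le : - x <= `|x| by rewrite -normrN ler_norm.
apply: (le_trans (le_y (m0 + d) _)); first by apply/andP; split; lra.
nra.
Qed.

Section HconvexBound.
Variables (n : nat) (R : realType) (c r : R) (Omega : set (heis n R)) (u : heis n R -> R).
Hypotheses (ball_sub : ballH (horigin n R) (c * r) `<=` Omega)
  (u_Hconvex : Hconvex_fun (closure Omega) u) (u_le0 : forall p, Omega p -> u p <= 0).

Lemma Hconvex_le_onem_mul p q mu : Omega p -> horiz p q -> 0 < mu <= 1 ->
  gauge p + dH q p / mu < c * r -> u q <= (1 - mu) * u p.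
Proof.
move=> Op pq /andP[mu_gt0 mu_le1] lt_cr.
(* [xi] prolongs the horizontal segment from [p] through [q], so that [q = p o delta_mu (p^-1 o xi)]. *)
set w := hmul (hinv p) q; set xi := hmul p (hdil mu^-1 w).
have w0 : ht w = 0 by apply/(horiz_hmul p); rewrite hmulKV.
have dil_w0 : ht (hdil mu^-1 w) = 0 by move: w0; rewrite /ht /= => ->; rewrite mulr0.
have O_xi : Omega xi.
  apply: ball_sub; rewrite /ballH /= dH0; apply: le_lt_trans (gauge_hmul_ht0 p dil_w0) _.
  by rewrite gauge_hdil ?invr_ge0 ?ltW // mulrC.
have xi_p : horiz xi p by apply/horizC/horiz_hmul.
have := u_Hconvex (subset_closure Op) (subset_closure O_xi) xi_p (l := mu).
rewrite /xi hmulK hdilM mulfV ?gt_eqF // hdil1 hmulKV mu_le1 ltW // => /(_ isT).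
have : mu * u xi <= 0 by rewrite pmulr_rle0 // u_le0.
lra.
Qed.

Lemma Hconvex_ratio_bound p q a b : 0 < r -> Omega p -> horiz p q ->
  gauge p <= a * r -> dH q p <= b * r -> a + b < c ->
  u q <= (c - a - b) / (c - a) * u p.
Proof.
move=> r_gt0 Op pq le_p le_qp abc.
have b_ge0 : 0 <= b by rewrite -(pmulr_lge0 _ r_gt0) (le_trans (gauge_ge0 _) le_qp).
have ca_gt0 : 0 < c - a by lra.
have -> : (c - a - b) / (c - a) = 1 - b / (c - a) by field; rewrite gt_eqF.
apply: ler_onem_mul_lim => [|mu /andP[lt_mu mu_le1]].
  by rewrite ltr_pdivrMr // mul1r; lra.
have mu_gt0 : 0 < mu := le_lt_trans (divr_ge0 b_ge0 (ltW ca_gt0)) lt_mu.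
apply: Hconvex_le_onem_mul => //; first by rewrite mu_gt0.
have b_lt : b < mu * (c - a) by rewrite -ltr_pdivrMr.
have : dH q p / mu <= b * r / mu by rewrite ler_pM2r ?invr_gt0.
have : b * r / mu < (c - a) * r by rewrite ltr_pdivrMr //; nra.
lra.
Qed.

End HconvexBound.

Theorem lemma6p6 (n : nat) (R : realType) (c r : R) (Omega : set (heis n R))
  (u : heis n R -> R) (xi1 xi2 : heis n R) (c1 c2 c3 : R) :
  0 < c -> 0 < r ->
  open Omega -> eucl_convex Omega ->
  ballH (horigin n R) (c * r) `<=` Omega ->
  Hconvex_fun (closure Omega) u ->
  (forall p, Omega p -> u p <= 0) ->
  ballH (horigin n R) (c * r) xi1 -> ballH (horigin n R) (c * r) xi2 ->
  horiz xi1 xi2 ->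
  0 <= c1 -> 0 <= c2 -> 0 < c3 ->
  gauge xi1 <= c1 * r -> gauge xi2 <= c2 * r -> dH xi1 xi2 <= c3 * r ->
  c1 + c3 < c -> c2 + c3 < c ->
  (c - c1 - c3) / (c - c1) * u xi1 >= u xi2 /\
  u xi2 >= (c - c2) / (c - c2 - c3) * u xi1.
Proof.
move=> _ r_gt0 _ _ sub u_Hconvex u_le0 xi1_ball xi2_ball xi12 _ _ c3_gt0 le1 le2 le12 lt1 lt2.
have bound := Hconvex_ratio_bound sub u_Hconvex u_le0 r_gt0.
split; first by apply: bound (sub _ xi1_ball) xi12 le1 _ lt1; rewrite dHC.
have k_gt0 : 0 < (c - c2 - c3) / (c - c2) by apply: divr_gt0; lra.
rewrite -invf_div -(ler_pM2l k_gt0) mulrA mulfV ?gt_eqF // mul1r.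
exact: bound (sub _ xi2_ball) (horizC xi12) le2 le12 lt2.
Qed.
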